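(* (Quantalic McShane–Whitney Extension Theorem.) Let $\mathcal{V}$ be a quantale and let $(X,d)$ be a $\mathcal{V}$-category. For every subset $Y\subseteq X$ and every map $f\colon Y\to\mathcal{V}$ that is non-expansive from $(Y,d|_{Y\times Y})$ to $(\mathcal{V},d_{\mathcal{V}})$, there exists a map $\bar f\colon X\to\mathcal{V}$ that is non-expansive from $(X,d)$ to $(\mathcal{V},d_{\mathcal{V}})$ and satisfies $\bar f(y)=f(y)$ for all $y\in Y$.
   Context: A quantale is a complete lattice $(\mathcal{V},\sqsubseteq)$ equipped with a commutative monoid structure $(\mathcal{V},\otimes,k)$ such that $a\otimes\bigsqcup_i b_i=\bigsqcup_i (a\otimes b_i)$ for all $a$ and all families $(b_i)$. Its residuation $d_{\mathcal{V}}\colon\mathcal{V}\times\mathcal{V}\to\mathcal{V}$ is the map determined by $a\otimes b\sqsubseteq c \iff b\sqsubseteq d_{\mathcal{V}}(a,c)$ for all $a,b,c\in\mathcal{V}$. A $\mathcal{V}$-graph on a set $X$ is a map $d\colon X\times X\to\mathcal{V}$; it is a $\mathcal{V}$-category if $k\sqsubseteq d(x,x)$ and $d(x,y)\otimes d(y,z)\sqsubseteq d(x,z)$ for all $x,y,z\in X$. A map $f\colon X\to Z$ is non-expansive from $(X,d_X)$ to $(Z,d_Z)$ if $d_X(x,x')\sqsubseteq d_Z(f(x),f(x'))$ for all $x,x'\in X$. *)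

(** Families (b_i) are represented by
    their sets of values, which determine the supremum. *)
Record quantale := Quantale {
  qcar :> Type;
  qle : qcar -> qcar -> Prop;
  qsup : (qcar -> Prop) -> qcar;
  qtensor : qcar -> qcar -> qcar;
  qunit : qcar;
  qle_refl : forall a, qle a a;
  qle_trans : forall a b c, qle a b -> qle b c -> qle a c;
  qle_antisym : forall a b, qle a b -> qle b a -> a = b;
  qsup_ub : forall (S : qcar -> Prop) a, S a -> qle a (qsup S);
  qsup_least : forall (S : qcar -> Prop) u,
      (forall a, S a -> qle a u) -> qle (qsup S) u;
  qtensorA : forall a b c, qtensor a (qtensor b c) = qtensor (qtensor a b) c;
  qtensorC : forall a b, qtensor a b = qtensor b a;
  qtensor1 : forall a, qtensor qunit a = a;
  qtensor_sup : forall a (S : qcar -> Prop),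
      qtensor a (qsup S) = qsup (fun c => exists b, S b /\ c = qtensor a b)
}.

Arguments qle {q}.
Arguments qsup {q}.
Arguments qtensor {q}.
Arguments qunit {q}.

(** The residuation d_V(a,c): the map determined by
    a (x) b <= c  <->  b <= d_V(a,c); in a quantale it is
    the supremum of { b | a (x) b <= c }. *)
Definition resid {V : quantale} (a c : V) : V :=
  qsup (fun b => qle (qtensor a b) c).

Definition is_Vcategory {V : quantale} {X : Type} (d : X -> X -> V) : Prop :=
  (forall x, qle qunit (d x x)) /\
  (forall x y z, qle (qtensor (d x y) (d y z)) (d x z)).

Definition non_expansive {V : quantale} {X Z : Type}
    (dX : X -> X -> V) (dZ : Z -> Z -> V) (f : X -> Z) : Prop :=
  forall x x', qle (dX x x') (dZ (f x) (f x')).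


(* The extension is the quantalic analogue of McShane's formula
   inf_y (f y + d(y, x)): fbar x := sup_y (f y (x) d(y, x)).  By the adjunction
   defining d_V, a map g is non-expansive into (V, d_V) exactly when
   g x (x) d(x, x') <= g x'.  For fbar this follows from the transitivity of d
   and the distributivity of (x) over suprema; on Y, non-expansiveness of f
   bounds every term of the supremum by f y, while the reflexivity k <= d(y, y)
   makes the term at y itself at least f y. *)

Section QuantaleTheory.

Context {V : quantale}.

Definition qsupf {I : Type} (F : I -> V) : V := qsup (fun c => exists i, c = F i).

Lemma qsupf_ub {I : Type} (F : I -> V) (i : I) : qle (F i) (qsupf F).
Proof. apply qsup_ub. exists i. reflexivity. Qed.

Lemma qsupf_least {I : Type} (F : I -> V) (u : V) :
  (forall i, qle (F i) u) -> qle (qsupf F) u.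
Proof. intros HF. apply qsup_least. intros c [i ->]. apply HF. Qed.

Lemma qtensor_qsupf_least {I : Type} (F : I -> V) (a u : V) :
  (forall i, qle (qtensor (F i) a) u) -> qle (qtensor (qsupf F) a) u.
Proof.
  intros HF. unfold qsupf. rewrite qtensorC, qtensor_sup. apply qsup_least.
  intros c [b [[i ->] ->]]. rewrite qtensorC. apply HF.
Qed.

Lemma qtensor_monor (a b b' : V) : qle b b' -> qle (qtensor a b) (qtensor a b').
Proof.
  intros Hbb'.
  assert (Hsup : qsup (fun c => c = b \/ c = b') = b').
  { apply qle_antisym.
    - apply qsup_least. intros c [-> | ->]; [exact Hbb' | apply qle_refl].
    - apply qsup_ub. right. reflexivity. }
  rewrite <- Hsup, qtensor_sup. apply qsup_ub.
  exists b. split; [left |]; reflexivity.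
Qed.

Lemma residP (a b c : V) : qle (qtensor a b) c <-> qle b (resid a c).
Proof.
  split.
  - intros Habc. apply qsup_ub. exact Habc.
  - intros Hb. apply qle_trans with (qtensor a (resid a c)).
    + apply qtensor_monor. exact Hb.
    + unfold resid. rewrite qtensor_sup. apply qsup_least.
      intros x [b' [Hb' ->]]. exact Hb'.
Qed.

Lemma non_expansive_residE {Z : Type} (dZ : Z -> Z -> V) (g : Z -> V) :
  non_expansive dZ (@resid V) g <->
  (forall z z', qle (qtensor (g z) (dZ z z')) (g z')).
Proof.
  split; intros Hg z z'; apply residP; apply Hg.
Qed.

End QuantaleTheory.

Section McShaneExtension.

Context {V : quantale} {X Y : Type}.
Variables (d : X -> X -> V) (i : Y -> X) (f : Y -> V).

Hypothesis d_refl : forall x, qle qunit (d x x).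
Hypothesis d_trans : forall x y z, qle (qtensor (d x y) (d y z)) (d x z).
Hypothesis f_non_expansive : non_expansive (fun y y' => d (i y) (i y')) (@resid V) f.

Definition mcshane_ext (x : X) : V := qsupf (fun y => qtensor (f y) (d (i y) x)).

Lemma mcshane_ext_non_expansive : non_expansive d (@resid V) mcshane_ext.
Proof.
  apply non_expansive_residE. intros x x'.
  apply qtensor_qsupf_least. intros y.
  apply qle_trans with (qtensor (f y) (d (i y) x')).
  - rewrite <- qtensorA. apply qtensor_monor, d_trans.
  - apply (qsupf_ub (fun y => qtensor (f y) (d (i y) x'))).
Qed.

Lemma mcshane_ext_extends (y : Y) : mcshane_ext (i y) = f y.
Proof.
  apply qle_antisym.
  - apply qsupf_least. intros y'.
    exact (proj1 (non_expansive_residE _ f) f_non_expansive y' y).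
  - apply qle_trans with (qtensor (f y) (d (i y) (i y))).
    + apply qle_trans with (qtensor (f y) qunit).
      * rewrite qtensorC, qtensor1. apply qle_refl.
      * apply qtensor_monor, d_refl.
    + apply (qsupf_ub (fun y' => qtensor (f y') (d (i y') (i y)))).
Qed.

End McShaneExtension.

Theorem mainTheorem2 (V : quantale) (X : Type) (d : X -> X -> V)
  (hd : is_Vcategory d) (Y : X -> Prop) (f : {x : X | Y x} -> V)
  (hf : non_expansive (fun y y' : {x : X | Y x} => d (proj1_sig y) (proj1_sig y'))
          (@resid V) f) :
  exists fbar : X -> V,
    non_expansive d (@resid V) fbar /\
    (forall (y : X) (hy : Y y), fbar y = f (exist _ y hy)).
Proof.
  destruct hd as [d_refl d_trans].
  exists (mcshane_ext d (@proj1_sig X Y) f).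
  split.
  - exact (mcshane_ext_non_expansive d _ f d_trans).
  - intros y hy.
    exact (mcshane_ext_extends d _ f d_refl hf (exist _ y hy)).
Qed.
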